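(* Let $M$ be a simply-connected domain in the Minkowski plane $(\mathbb{R}^2(u,v),du\,dv)$, let $\omega,Q,R:M\to\mathbb{R}$ be smooth functions and $H\in\mathbb{R}$ a constant. (1) Suppose $\Phi=(\Phi_1,\Phi_2):M\to\mathrm{SL}_2\mathbb{R}\times\mathrm{SL}_2\mathbb{R}$ is smooth and satisfies $(\Phi_1)_u=\Phi_1\mathcal U_1$, $(\Phi_1)_v=\Phi_1\mathcal V_1$, $(\Phi_2)_u=\Phi_2\mathcal U_2$, $(\Phi_2)_v=\Phi_2\mathcal V_2$, where $$\mathcal U_1=\begin{pmatrix}\frac{\omega_u}{4}&\frac12e^{\omega/2}(H+1)\\-e^{-\omega/2}Q&-\frac{\omega_u}{4}\end{pmatrix},\ \mathcal V_1=\begin{pmatrix}-\frac{\omega_v}{4}&e^{-\omega/2}R\\-\frac12e^{\omega/2}(H-1)&\frac{\omega_v}{4}\end{pmatrix},$$ $$\mathcal U_2=\begin{pmatrix}-\frac{\omega_u}{4}&e^{-\omega/2}Q\\-\frac12e^{\omega/2}(H-1)&\frac{\omega_u}{4}\end{pmatrix},\ \mathcal V_2=\begin{pmatrix}\frac{\omega_v}{4}&\frac12e^{\omega/2}(H+1)\\-e^{-\omega/2}R&-\frac{\omega_v}{4}\end{pmatrix}.$$ Then $\varphi:=\Phi_1\Phi_2^t:M\to\mathbb{H}^3_1(-1)$ is a conformal timelike immersion with induced metric $e^{\omega}du\,dv$ and constant mean curvature $H$ (with respect to the unit normal $N=\Phi_1\mathbf k'\Phi_2^t$). (2) Suppose $\Psi=(\Psi_1,\Psi_2):M\to\mathrm{SL}_2\mathbb{R}\times\mathrm{SL}_2\mathbb{R}$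 is smooth and satisfies $(\Psi_1)_u=\Psi_1\mathcal U_1$, $(\Psi_1)_v=\Psi_1\mathcal V_1$, $(\Psi_2)_u=\Psi_2\mathcal U_2'$, $(\Psi_2)_v=\Psi_2\mathcal V_2'$, with $\mathcal U_1,\mathcal V_1$ as in (1) and $$\mathcal U_2'=\begin{pmatrix}\frac{\omega_u}{4}&\frac12e^{\omega/2}(H-1)\\-e^{-\omega/2}Q&-\frac{\omega_u}{4}\end{pmatrix},\ \mathcal V_2'=\begin{pmatrix}-\frac{\omega_v}{4}&e^{-\omega/2}R\\-\frac12e^{\omega/2}(H+1)&\frac{\omega_v}{4}\end{pmatrix}.$$ Then $\psi:=\Psi_1\Psi_2^{-1}:M\to\mathbb{H}^3_1(-1)$ is a conformal timelike immersion with induced metric $e^{\omega}du\,dv$ and constant mean curvature $H$ (with respect to the unit normal $N=\Psi_1\mathbf k'\Psi_2^{-1}$).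
   Context: $\mathbb{E}^4_2$ is $\mathbb{R}^4$ with metric $-(dx_0)^2-(dx_1)^2+(dx_2)^2+(dx_3)^2$, identified with $M_2(\mathbb{R})$ via $(x_0,x_1,x_2,x_3)\mapsto \begin{pmatrix}x_0+x_3& x_1+x_2\\ -x_1+x_2 & x_0-x_3\end{pmatrix}$, so that $\langle u,v\rangle=\tfrac12\{\operatorname{tr}(uv)-\operatorname{tr}u\operatorname{tr}v\}$, $\langle u,u\rangle=-\det u$, and anti-de Sitter space $\mathbb{H}^3_1(-1)=\{\langle x,x\rangle=-1\}$ becomes $\mathrm{SL}_2\mathbb{R}$. $\mathbf k'=\begin{pmatrix}1&0\\0&-1\end{pmatrix}$. For an immersion $\varphi$ of a domain with null coordinates $(u,v)$, conformal timelike means $\langle\varphi_u,\varphi_u\rangle=\langle\varphi_v,\varphi_v\rangle=0$, $\langle\varphi_u,\varphi_v\rangle=\tfrac12e^{\omega}$ (metric $e^\omega du\,dv$); for a unit normal $N$ ($\langle N,N\rangle=1$, $N\perp\varphi,\varphi_u,\varphi_v$) the mean curvature is $H=2e^{-\omega}\langle\varphi_{uv},N\rangle$. *)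

From Stdlib Require Import Reals.
From Coquelicot Require Import Coquelicot.
Open Scope R_scope.

Record mat2 := M2 { m11 : R; m12 : R; m21 : R; m22 : R }.

Definition mmul (a b : mat2) : mat2 :=
  M2 (m11 a * m11 b + m12 a * m21 b) (m11 a * m12 b + m12 a * m22 b)
     (m21 a * m11 b + m22 a * m21 b) (m21 a * m12 b + m22 a * m22 b).
Definition mtr (a : mat2) : mat2 := M2 (m11 a) (m21 a) (m12 a) (m22 a).
Definition mdet (a : mat2) : R := m11 a * m22 a - m12 a * m21 a.
Definition mtrace (a : mat2) : R := m11 a + m22 a.
Definition minv (a : mat2) : mat2 :=
  M2 (m22 a / mdet a) (- m12 a / mdet a) (- m21 a / mdet a) (m11 a / mdet a).
Definition madd (a b : mat2) : mat2 :=
  M2 (m11 a + m11 b) (m12 a + m12 b) (m21 a + m21 b) (m22 a + m22 b).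
Definition mscal (c : R) (a : mat2) : mat2 :=
  M2 (c * m11 a) (c * m12 a) (c * m21 a) (c * m22 a).
Definition mzero : mat2 := M2 0 0 0 0.

(* the metric of E^4_2 transported to M_2(R): <u,v> = 1/2 (tr(uv) - tr u tr v) *)
Definition inner (a b : mat2) : R :=
  / 2 * (mtrace (mmul a b) - mtrace a * mtrace b).

Definition kprime : mat2 := M2 1 0 0 (-1).

Definition connected_set (M : R * R -> Prop) : Prop :=
  forall U V : R * R -> Prop, open U -> open V ->
    (forall p, M p -> U p \/ V p) ->
    (exists p, M p /\ U p) -> (exists p, M p /\ V p) ->
    exists p, M p /\ U p /\ V p.

Definition simply_connected_set (M : R * R -> Prop) : Prop :=
  forall g : R -> R * R,
    (forall s, continuous g s) ->
    (forall s, 0 <= s <= 1 -> M (g s)) ->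
    g 0 = g 1 ->
    exists h : R * R -> R * R,
      (forall p, continuous h p) /\
      (forall s t, 0 <= s <= 1 -> 0 <= t <= 1 -> M (h (s, t))) /\
      (forall s, 0 <= s <= 1 -> h (s, 0) = g s) /\
      (forall s, 0 <= s <= 1 -> h (s, 1) = g 0) /\
      (forall t, 0 <= t <= 1 -> h (0, t) = g 0 /\ h (1, t) = g 0).

Definition simply_connected_domain (M : R * R -> Prop) : Prop :=
  open M /\ (exists p, M p) /\ connected_set M /\ simply_connected_set M.

Definition pu (f : R -> R -> R) : R -> R -> R := fun u v => Derive (fun t => f t v) u.
Definition pv (f : R -> R -> R) : R -> R -> R := fun u v => Derive (fun t => f u t) v.

Definition C0 (M : R * R -> Prop) (f : R -> R -> R) : Prop :=
  forall u v, M (u, v) -> continuous (fun p : R * R => f (fst p) (snd p)) (u, v).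

Fixpoint Cn (n : nat) (M : R * R -> Prop) (f : R -> R -> R) : Prop :=
  match n with
  | O => C0 M f
  | S k => C0 M f /\
           (forall u v, M (u, v) -> ex_derive (fun t => f t v) u /\ ex_derive (fun t => f u t) v) /\
           Cn k M (pu f) /\ Cn k M (pv f)
  end.

Definition smooth_on (M : R * R -> Prop) (f : R -> R -> R) : Prop := forall n, Cn n M f.

Definition smooth_mat_on (M : R * R -> Prop) (F : R -> R -> mat2) : Prop :=
  smooth_on M (fun u v => m11 (F u v)) /\ smooth_on M (fun u v => m12 (F u v)) /\
  smooth_on M (fun u v => m21 (F u v)) /\ smooth_on M (fun u v => m22 (F u v)).

Definition mpu (F : R -> R -> mat2) : R -> R -> mat2 := fun u v =>
  M2 (pu (fun a b => m11 (F a b)) u v) (pu (fun a b => m12 (F a b)) u v)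
     (pu (fun a b => m21 (F a b)) u v) (pu (fun a b => m22 (F a b)) u v).
Definition mpv (F : R -> R -> mat2) : R -> R -> mat2 := fun u v =>
  M2 (pv (fun a b => m11 (F a b)) u v) (pv (fun a b => m12 (F a b)) u v)
     (pv (fun a b => m21 (F a b)) u v) (pv (fun a b => m22 (F a b)) u v).

Definition into_SL2 (M : R * R -> Prop) (F : R -> R -> mat2) : Prop :=
  forall u v, M (u, v) -> mdet (F u v) = 1.

Section Coeffs.
Variables (om Q Rr : R -> R -> R) (H : R).
Definition U1 u v : mat2 :=
  M2 (pu om u v / 4) (/ 2 * exp (om u v / 2) * (H + 1))
     (- exp (- om u v / 2) * Q u v) (- (pu om u v / 4)).
Definition V1 u v : mat2 :=
  M2 (- (pv om u v / 4)) (exp (- om u v / 2) * Rr u v)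
     (- (/ 2 * exp (om u v / 2) * (H - 1))) (pv om u v / 4).
Definition U2 u v : mat2 :=
  M2 (- (pu om u v / 4)) (exp (- om u v / 2) * Q u v)
     (- (/ 2 * exp (om u v / 2) * (H - 1))) (pu om u v / 4).
Definition V2 u v : mat2 :=
  M2 (pv om u v / 4) (/ 2 * exp (om u v / 2) * (H + 1))
     (- exp (- om u v / 2) * Rr u v) (- (pv om u v / 4)).
Definition U2' u v : mat2 :=
  M2 (pu om u v / 4) (/ 2 * exp (om u v / 2) * (H - 1))
     (- exp (- om u v / 2) * Q u v) (- (pu om u v / 4)).
Definition V2' u v : mat2 :=
  M2 (- (pv om u v / 4)) (exp (- om u v / 2) * Rr u v)
     (- (/ 2 * exp (om u v / 2) * (H + 1))) (pv om u v / 4).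
End Coeffs.

Definition conformal_timelike_CMC_immersion (M : R * R -> Prop)
    (phi : R -> R -> mat2) (om : R -> R -> R) (H : R) (N : R -> R -> mat2) : Prop :=
  smooth_mat_on M phi /\ smooth_mat_on M N /\
  forall u v, M (u, v) ->
    let pu_ := mpu phi u v in
    let pv_ := mpv phi u v in
    inner (phi u v) (phi u v) = -1 /\
    (forall a b : R, madd (mscal a pu_) (mscal b pv_) = mzero -> a = 0 /\ b = 0) /\
    (* conformal timelike with metric e^om du dv *)
    inner pu_ pu_ = 0 /\ inner pv_ pv_ = 0 /\ inner pu_ pv_ = / 2 * exp (om u v) /\
    inner (N u v) (N u v) = 1 /\ inner (N u v) (phi u v) = 0 /\
    inner (N u v) pu_ = 0 /\ inner (N u v) pv_ = 0 /\
    2 * exp (- om u v) * inner (mpv (mpu phi) u v) (N u v) = H.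

(* The group SL_2 R x SL_2 R acts isometrically on E^4_2 = M_2(R) by X |-> P X S^t.
   For a frame (P, S) solving the structure equations, the product rule gives
   phi_u = P (U1 + U2^t) S^t and phi_v = P (V1 + V2^t) S^t, and U1 + U2^t, V1 + V2^t
   are the nilpotent matrices e^(om/2) E12 and e^(om/2) E21.  Differentiating once more,
   phi_uv = (e^om / 2) (phi + H N) with N = P k' S^t.  All the metric conditions are
   therefore checked on the fixed matrices I, E12, E21 and k'.  Part (2) reduces to
   part (1): for S in SL_2 R one has S^-1 = (cof S)^t, where cof is the cofactor matrix,
   which is multiplicative and maps U2', V2' to U2, V2. *)
From Stdlib Require Import Reals Lra FunctionalExtensionality.
From Coquelicot Require Import Coquelicot.
Open Scope R_scope.

Section OpenDomain.
Variable M : R * R -> Prop.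
Hypothesis M_open : open M.

Lemma locally_slice_u u v : M (u, v) -> locally u (fun t => M (t, v)).
Proof.
  intros Muv. destruct (M_open _ Muv) as [e He]. exists e. intros t Ht.
  apply He. split; [exact Ht | apply ball_center].
Qed.

Lemma locally_slice_v u v : M (u, v) -> locally v (fun t => M (u, t)).
Proof.
  intros Muv. destruct (M_open _ Muv) as [e He]. exists e. intros t Ht.
  apply He. split; [apply ball_center | exact Ht].
Qed.

Lemma C0_ext_on f g : (forall u v, M (u, v) -> f u v = g u v) -> C0 M f -> C0 M g.
Proof.
  intros Efg Hf u v Muv.
  apply (continuous_ext_loc _ (fun p : R * R => f (fst p) (snd p))); [|now apply Hf].
  apply (filter_imp M); [intros [a b] Mab; now apply Efg | exact (M_open _ Muv)].
Qed.

Lemma pu_ext_on f g u v :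
  (forall a b, M (a, b) -> f a b = g a b) -> M (u, v) -> pu f u v = pu g u v.
Proof.
  intros Efg Muv. apply Derive_ext_loc.
  apply (filter_imp (fun t => M (t, v))); [intros; now apply Efg | now apply locally_slice_u].
Qed.

Lemma pv_ext_on f g u v :
  (forall a b, M (a, b) -> f a b = g a b) -> M (u, v) -> pv f u v = pv g u v.
Proof.
  intros Efg Muv. apply Derive_ext_loc.
  apply (filter_imp (fun t => M (u, t))); [intros; now apply Efg | now apply locally_slice_v].
Qed.

Lemma Cn_ext_on n : forall f g : R -> R -> R,
  (forall u v, M (u, v) -> f u v = g u v) -> Cn n M f -> Cn n M g.
Proof.
  induction n as [|n IH]; intros f g Efg Hf; [exact (C0_ext_on f g Efg Hf)|].
  destruct Hf as [Hf0 [Hdf [Hfu Hfv]]]. split; [|split; [|split]].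
  - exact (C0_ext_on f g Efg Hf0).
  - intros u v Muv. destruct (Hdf u v Muv) as [Du Dv]. split.
    + apply (ex_derive_ext_loc (fun t => f t v)); [|exact Du].
      apply (filter_imp (fun t => M (t, v))); [intros; now apply Efg | now apply locally_slice_u].
    + apply (ex_derive_ext_loc (fun t => f u t)); [|exact Dv].
      apply (filter_imp (fun t => M (u, t))); [intros; now apply Efg | now apply locally_slice_v].
  - apply (IH (pu f)); [intros u v Muv; now apply pu_ext_on | exact Hfu].
  - apply (IH (pv f)); [intros u v Muv; now apply pv_ext_on | exact Hfv].
Qed.

Lemma smooth_on_ext f g :
  (forall u v, M (u, v) -> f u v = g u v) -> smooth_on M f -> smooth_on M g.
Proof. intros Efg Hf n. exact (Cn_ext_on n f g Efg (Hf n)). Qed.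

Lemma smooth_mat_on_ext (F G : R -> R -> mat2) :
  (forall u v, M (u, v) -> F u v = G u v) -> smooth_mat_on M F -> smooth_mat_on M G.
Proof.
  intros EFG (F1 & F2 & F3 & F4).
  repeat split; [ apply (smooth_on_ext (fun u v => m11 (F u v)))
                | apply (smooth_on_ext (fun u v => m12 (F u v)))
                | apply (smooth_on_ext (fun u v => m21 (F u v)))
                | apply (smooth_on_ext (fun u v => m22 (F u v))) ];
    auto; intros u v Muv; now rewrite EFG.
Qed.

Lemma mpu_ext_on (F G : R -> R -> mat2) u v :
  (forall a b, M (a, b) -> F a b = G a b) -> M (u, v) -> mpu F u v = mpu G u v.
Proof.
  intros EFG Muv. unfold mpu.
  f_equal; apply pu_ext_on; auto; intros a b Mab; now rewrite EFG.
Qed.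

Lemma mpv_ext_on (F G : R -> R -> mat2) u v :
  (forall a b, M (a, b) -> F a b = G a b) -> M (u, v) -> mpv F u v = mpv G u v.
Proof.
  intros EFG Muv. unfold mpv.
  f_equal; apply pv_ext_on; auto; intros a b Mab; now rewrite EFG.
Qed.

Lemma Cn_S_Cn n f : Cn (S n) M f -> Cn n M f.
Proof.
  revert f; induction n as [|n IH]; intros f Hf; [exact (proj1 Hf)|].
  destruct Hf as [Hf0 [Hdf [Hfu Hfv]]].
  split; [exact Hf0 | split; [exact Hdf | split; apply IH; assumption]].
Qed.

Lemma Cn_const n : forall c, Cn n M (fun _ _ => c).
Proof.
  induction n as [|n IH]; intros c; [intros u v _; apply continuous_const|].
  assert (Dc : pu (fun _ _ => c) = (fun _ _ => 0) /\ pv (fun _ _ => c) = (fun _ _ => 0)).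
  { unfold pu, pv; split; extensionality u; extensionality v; apply Derive_const. }
  destruct Dc as [Du Dv].
  split; [intros u v _; apply continuous_const|].
  split; [intros; split; apply ex_derive_const|].
  rewrite Du, Dv. split; apply IH.
Qed.

Lemma Cn_plus n : forall f g, Cn n M f -> Cn n M g -> Cn n M (fun u v => f u v + g u v).
Proof.
  assert (C0_plus : forall f g, C0 M f -> C0 M g -> C0 M (fun u v => f u v + g u v)).
  { intros f g Hf Hg u v Muv.
    apply (continuous_plus (fun p : R * R => f (fst p) (snd p))
                           (fun p : R * R => g (fst p) (snd p))); auto. }
  induction n as [|n IH]; intros f g Hf Hg; [now apply C0_plus|].
  destruct Hf as [F0 [F1 [F2 F3]]], Hg as [G0 [G1 [G2 G3]]].
  split; [now apply C0_plus | split; [|split]].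
  - intros u v Muv. destruct (F1 u v Muv), (G1 u v Muv).
    split; apply (ex_derive_plus (K := R_AbsRing) (V := R_NormedModule)); auto.
  - apply (Cn_ext_on n (fun u v => pu f u v + pu g u v)); [|now apply IH].
    intros u v Muv. destruct (F1 u v Muv), (G1 u v Muv).
    symmetry. apply (Derive_plus (fun t => f t v) (fun t => g t v)); auto.
  - apply (Cn_ext_on n (fun u v => pv f u v + pv g u v)); [|now apply IH].
    intros u v Muv. destruct (F1 u v Muv), (G1 u v Muv).
    symmetry. apply (Derive_plus (fun t => f u t) (fun t => g u t)); auto.
Qed.

Lemma Cn_mult n : forall f g, Cn n M f -> Cn n M g -> Cn n M (fun u v => f u v * g u v).
Proof.
  assert (C0_mult : forall f g, C0 M f -> C0 M g -> C0 M (fun u v => f u v * g u v)).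
  { intros f g Hf Hg u v Muv.
    apply (continuous_mult (fun p : R * R => f (fst p) (snd p))
                           (fun p : R * R => g (fst p) (snd p))); auto. }
  induction n as [|n IH]; intros f g Hf Hg; [now apply C0_mult|].
  pose proof (Cn_S_Cn _ _ Hf) as Hf'. pose proof (Cn_S_Cn _ _ Hg) as Hg'.
  destruct Hf as [F0 [F1 [F2 F3]]], Hg as [G0 [G1 [G2 G3]]].
  split; [now apply C0_mult | split; [|split]].
  - intros u v Muv. destruct (F1 u v Muv), (G1 u v Muv). split; apply ex_derive_mult; auto.
  - apply (Cn_ext_on n (fun u v => pu f u v * g u v + f u v * pu g u v)).
    + intros u v Muv. destruct (F1 u v Muv), (G1 u v Muv).
      symmetry. apply (Derive_mult (fun t => f t v) (fun t => g t v)); auto.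
    + apply Cn_plus; apply IH; auto.
  - apply (Cn_ext_on n (fun u v => pv f u v * g u v + f u v * pv g u v)).
    + intros u v Muv. destruct (F1 u v Muv), (G1 u v Muv).
      symmetry. apply (Derive_mult (fun t => f u t) (fun t => g u t)); auto.
    + apply Cn_plus; apply IH; auto.
Qed.

Lemma smooth_on_plus f g :
  smooth_on M f -> smooth_on M g -> smooth_on M (fun u v => f u v + g u v).
Proof. intros Hf Hg n. now apply Cn_plus. Qed.

Lemma smooth_on_mult f g :
  smooth_on M f -> smooth_on M g -> smooth_on M (fun u v => f u v * g u v).
Proof. intros Hf Hg n. now apply Cn_mult. Qed.

Lemma smooth_on_opp f : smooth_on M f -> smooth_on M (fun u v => - f u v).
Proof.
  intros Hf. apply (smooth_on_ext (fun u v => (-1) * f u v)); [intros; ring|].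
  apply smooth_on_mult; [intros n; apply Cn_const | exact Hf].
Qed.

Lemma smooth_mat_on_mul A B : smooth_mat_on M A -> smooth_mat_on M B ->
  smooth_mat_on M (fun u v => mmul (A u v) (B u v)).
Proof.
  intros (A1 & A2 & A3 & A4) (B1 & B2 & B3 & B4); unfold mmul; simpl.
  repeat split; apply smooth_on_plus; apply smooth_on_mult; assumption.
Qed.

Lemma smooth_mat_on_tr A : smooth_mat_on M A -> smooth_mat_on M (fun u v => mtr (A u v)).
Proof. intros (A1 & A2 & A3 & A4); unfold mtr; simpl; repeat split; assumption. Qed.

Lemma smooth_mat_on_const c : smooth_mat_on M (fun _ _ => c).
Proof. repeat split; intros n; apply Cn_const. Qed.

End OpenDomain.

Lemma smooth_on_ex_derive M f u v : smooth_on M f -> M (u, v) ->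
  ex_derive (fun t => f t v) u /\ ex_derive (fun t => f u t) v.
Proof. intros Hf Muv. destruct (Hf 1%nat) as [_ [Hdf _]]. now apply Hdf. Qed.

Definition ex_mpu (A : R -> R -> mat2) u v :=
  ex_derive (fun t => m11 (A t v)) u /\ ex_derive (fun t => m12 (A t v)) u /\
  ex_derive (fun t => m21 (A t v)) u /\ ex_derive (fun t => m22 (A t v)) u.
Definition ex_mpv (A : R -> R -> mat2) u v :=
  ex_derive (fun t => m11 (A u t)) v /\ ex_derive (fun t => m12 (A u t)) v /\
  ex_derive (fun t => m21 (A u t)) v /\ ex_derive (fun t => m22 (A u t)) v.

Lemma smooth_mat_on_ex_mp M A u v : smooth_mat_on M A -> M (u, v) -> ex_mpu A u v /\ ex_mpv A u v.
Proof.
  intros (A1 & A2 & A3 & A4) Muv.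
  destruct (smooth_on_ex_derive _ _ _ _ A1 Muv), (smooth_on_ex_derive _ _ _ _ A2 Muv),
    (smooth_on_ex_derive _ _ _ _ A3 Muv), (smooth_on_ex_derive _ _ _ _ A4 Muv).
  unfold ex_mpu, ex_mpv; tauto.
Qed.

Lemma Derive_mult_plus (f1 g1 f2 g2 : R -> R) x :
  ex_derive f1 x -> ex_derive g1 x -> ex_derive f2 x -> ex_derive g2 x ->
  Derive (fun t => f1 t * g1 t + f2 t * g2 t) x =
  (Derive f1 x * g1 x + f1 x * Derive g1 x) + (Derive f2 x * g2 x + f2 x * Derive g2 x).
Proof.
  intros. rewrite (Derive_plus (fun t => f1 t * g1 t) (fun t => f2 t * g2 t))
    by (apply ex_derive_mult; auto).
  rewrite !Derive_mult; auto.
Qed.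

Lemma mpu_mul A B u v : ex_mpu A u v -> ex_mpu B u v ->
  mpu (fun a b => mmul (A a b) (B a b)) u v =
  madd (mmul (mpu A u v) (B u v)) (mmul (A u v) (mpu B u v)).
Proof.
  intros (a1 & a2 & a3 & a4) (b1 & b2 & b3 & b4). unfold mpu, pu, mmul, madd; simpl.
  f_equal; rewrite Derive_mult_plus; auto; ring.
Qed.

Lemma mpv_mul A B u v : ex_mpv A u v -> ex_mpv B u v ->
  mpv (fun a b => mmul (A a b) (B a b)) u v =
  madd (mmul (mpv A u v) (B u v)) (mmul (A u v) (mpv B u v)).
Proof.
  intros (a1 & a2 & a3 & a4) (b1 & b2 & b3 & b4). unfold mpv, pv, mmul, madd; simpl.
  f_equal; rewrite Derive_mult_plus; auto; ring.
Qed.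

Lemma ex_mpv_mul A B u v : ex_mpv A u v -> ex_mpv B u v ->
  ex_mpv (fun a b => mmul (A a b) (B a b)) u v.
Proof.
  intros (a1 & a2 & a3 & a4) (b1 & b2 & b3 & b4); unfold ex_mpv, mmul; simpl.
  repeat split; apply (ex_derive_plus (K := R_AbsRing) (V := R_NormedModule));
    apply ex_derive_mult; auto.
Qed.

Lemma ex_mpu_tr A u v : ex_mpu A u v -> ex_mpu (fun a b => mtr (A a b)) u v.
Proof. unfold ex_mpu, mtr; simpl; tauto. Qed.

Lemma ex_mpv_tr A u v : ex_mpv A u v -> ex_mpv (fun a b => mtr (A a b)) u v.
Proof. unfold ex_mpv, mtr; simpl; tauto. Qed.

Lemma mpu_tr A u v : mpu (fun a b => mtr (A a b)) u v = mtr (mpu A u v).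
Proof. reflexivity. Qed.

Lemma mpv_tr A u v : mpv (fun a b => mtr (A a b)) u v = mtr (mpv A u v).
Proof. reflexivity. Qed.

Lemma Derive_exp_half (f : R -> R) x : ex_derive f x ->
  ex_derive (fun t => exp (f t / 2)) x /\
  Derive (fun t => exp (f t / 2)) x = exp (f x / 2) * (Derive f x / 2).
Proof.
  intros Df.
  assert (Dhalf : ex_derive (fun t => f t / 2) x /\ Derive (fun t => f t / 2) x = Derive f x / 2).
  { split.
    - apply (ex_derive_ext (fun t => / 2 * f t)); [intros; apply Rmult_comm|now apply ex_derive_scal].
    - rewrite (Derive_ext (fun t => f t / 2) (fun t => / 2 * f t)) by (intros; apply Rmult_comm).
      rewrite Derive_scal. apply Rmult_comm. }
  destruct Dhalf as [Dh Eh].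
  assert (Dexp : forall y, ex_derive exp y) by (intros y; eexists; apply is_derive_exp).
  split; [now apply (ex_derive_comp exp (fun t => f t / 2))|].
  rewrite (Derive_comp exp (fun t => f t / 2)), Eh by auto.
  rewrite (is_derive_unique exp _ _ (is_derive_exp _)). apply Rmult_comm.
Qed.

Definition I2 : mat2 := M2 1 0 0 1.
Definition E12 (e : R) : mat2 := M2 0 e 0 0.
Definition E21 (e : R) : mat2 := M2 0 0 e 0.

Definition sandwich (P S X : mat2) : mat2 := mmul (mmul P X) (mtr S).

Lemma sandwich_I2 P S : mmul P (mtr S) = sandwich P S I2.
Proof. destruct P, S; unfold sandwich, mmul, I2, mtr; simpl; f_equal; ring. Qed.

Lemma inner_sandwich P S X Y :
  inner (sandwich P S X) (sandwich P S Y) = mdet P * mdet S * inner X Y.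
Proof. destruct P, S, X, Y; unfold inner, sandwich, mmul, mtr, mdet, mtrace; simpl; field. Qed.

Lemma sandwich_lin P S a b X Y :
  madd (mscal a (sandwich P S X)) (mscal b (sandwich P S Y)) =
  sandwich P S (madd (mscal a X) (mscal b Y)).
Proof. destruct P, S, X, Y; unfold sandwich, madd, mscal, mmul, mtr; simpl; f_equal; ring. Qed.

Lemma unimodular_kernel a b c d y1 y3 : a * d - b * c = 1 ->
  a * y1 + b * y3 = 0 -> c * y1 + d * y3 = 0 -> y1 = 0 /\ y3 = 0.
Proof.
  intros Hdet E1 E2. split.
  - replace y1 with ((a * d - b * c) * y1) by (rewrite Hdet; ring).
    replace ((a * d - b * c) * y1) with (d * (a * y1 + b * y3) - b * (c * y1 + d * y3)) by ring.
    rewrite E1, E2; ring.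
  - replace y3 with ((a * d - b * c) * y3) by (rewrite Hdet; ring).
    replace ((a * d - b * c) * y3) with (a * (c * y1 + d * y3) - c * (a * y1 + b * y3)) by ring.
    rewrite E1, E2; ring.
Qed.

Lemma sandwich_eq0 P S X : mdet P = 1 -> mdet S = 1 -> sandwich P S X = mzero -> X = mzero.
Proof.
  destruct P as [p1 p2 p3 p4], S as [s1 s2 s3 s4], X as [x1 x2 x3 x4].
  unfold sandwich, mmul, mtr, mdet, mzero; simpl. intros HP HS E. injection E; intros e4 e3 e2 e1.
  destruct (unimodular_kernel p1 p2 p3 p4 (x1 * s1 + x2 * s2) (x3 * s1 + x4 * s2)) as [Z1 Z3];
    [exact HP | rewrite <- e1; ring | rewrite <- e3; ring |].
  destruct (unimodular_kernel p1 p2 p3 p4 (x1 * s3 + x2 * s4) (x3 * s3 + x4 * s4)) as [Z2 Z4];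
    [exact HP | rewrite <- e2; ring | rewrite <- e4; ring |].
  destruct (unimodular_kernel s1 s2 s3 s4 x1 x2) as [X1 X2]; [lra | lra | lra |].
  destruct (unimodular_kernel s1 s2 s3 s4 x3 x4) as [X3 X4]; [lra | lra | lra |].
  subst; reflexivity.
Qed.

Lemma mmul_sandwich_derivative P S X Y :
  madd (mmul (mmul P X) (mtr S)) (mmul P (mtr (mmul S Y))) = sandwich P S (madd X (mtr Y)).
Proof. destruct P, S, X, Y; unfold sandwich, madd, mmul, mtr; simpl; f_equal; ring. Qed.

Lemma sandwich_derivative P S X Y Z Z' :
  madd (mmul (madd (mmul (mmul P Y) X) (mmul P Z')) (mtr S)) (mmul (mmul P X) (mtr (mmul S Z))) =
  sandwich P S (madd (madd (mmul Y X) Z') (mmul X (mtr Z))).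
Proof. destruct P, S, X, Y, Z, Z'; unfold sandwich, madd, mmul, mtr; simpl; f_equal; ring. Qed.

Lemma sandwich_CMC_conditions P S w H : mdet P = 1 -> mdet S = 1 ->
  let f := sandwich P S in
  let e := exp (w / 2) in
  inner (f I2) (f I2) = -1 /\
  (forall a b : R, madd (mscal a (f (E12 e))) (mscal b (f (E21 e))) = mzero -> a = 0 /\ b = 0) /\
  inner (f (E12 e)) (f (E12 e)) = 0 /\ inner (f (E21 e)) (f (E21 e)) = 0 /\
  inner (f (E12 e)) (f (E21 e)) = / 2 * exp w /\
  inner (f kprime) (f kprime) = 1 /\ inner (f kprime) (f I2) = 0 /\
  inner (f kprime) (f (E12 e)) = 0 /\ inner (f kprime) (f (E21 e)) = 0 /\
  2 * exp (- w) * inner (f (mscal (exp w / 2) (madd I2 (mscal H kprime)))) (f kprime) = H.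
Proof.
  intros HP HS f e. unfold f. rewrite !inner_sandwich, HP, HS, !Rmult_1_l.
  assert (e_pos : 0 < e) by apply exp_pos.
  assert (ee : exp w = e * e) by (unfold e; rewrite <- exp_plus; f_equal; field).
  assert (eeV : exp (- w) = / (e * e)) by (rewrite exp_Ropp, ee; reflexivity).
  split; [unfold inner, I2, mmul, mtrace; simpl; field|].
  split.
  { intros a b E. rewrite sandwich_lin in E. apply sandwich_eq0 in E; auto.
    unfold E12, E21, madd, mscal, mzero in E; simpl in E.
    injection E; intros _ e3 e2 _. split; nra. }
  rewrite eeV, ee.
  unfold inner, I2, E12, E21, kprime, madd, mscal, mmul, mtrace; simpl.
  repeat split; field; lra.
Qed.

Lemma U1_add_tr_U2 om Q H u v :
  madd (U1 om Q H u v) (mtr (U2 om Q H u v)) = E12 (exp (om u v / 2)).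
Proof. unfold U1, U2, E12, madd, mtr; simpl; f_equal; field. Qed.

Lemma V1_add_tr_V2 om Rr H u v :
  madd (V1 om Rr H u v) (mtr (V2 om Rr H u v)) = E21 (exp (om u v / 2)).
Proof. unfold V1, V2, E21, madd, mtr; simpl; f_equal; field. Qed.

(* Gauss formula: phi_uv = (e^om / 2) (phi + H N). *)
Lemma Gauss_formula om Rr H u v :
  madd (madd (mmul (V1 om Rr H u v) (E12 (exp (om u v / 2))))
             (E12 (exp (om u v / 2) * (pv om u v / 2))))
       (mmul (E12 (exp (om u v / 2))) (mtr (V2 om Rr H u v))) =
  mscal (exp (om u v) / 2) (madd I2 (mscal H kprime)).
Proof.
  assert (ee : exp (om u v) = exp (om u v / 2) * exp (om u v / 2))
    by (rewrite <- exp_plus; f_equal; field).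
  rewrite ee. unfold V1, V2, E12, I2, kprime, madd, mscal, mmul, mtr; simpl; f_equal; field.
Qed.

Section Frame.
Variables (M : R * R -> Prop) (om Q Rr : R -> R -> R) (H : R) (P S : R -> R -> mat2).
Hypothesis M_open : open M.
Hypothesis om_smooth : smooth_on M om.
Hypotheses (P_smooth : smooth_mat_on M P) (S_smooth : smooth_mat_on M S).
Hypotheses (P_SL2 : into_SL2 M P) (S_SL2 : into_SL2 M S).
Hypothesis frame_eqs : forall u v, M (u, v) ->
  mpu P u v = mmul (P u v) (U1 om Q H u v) /\
  mpv P u v = mmul (P u v) (V1 om Rr H u v) /\
  mpu S u v = mmul (S u v) (U2 om Q H u v) /\
  mpv S u v = mmul (S u v) (V2 om Rr H u v).

Let phi u v := mmul (P u v) (mtr (S u v)).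

Lemma frame_pu u v : M (u, v) -> mpu phi u v = sandwich (P u v) (S u v) (E12 (exp (om u v / 2))).
Proof.
  intros Muv.
  destruct (smooth_mat_on_ex_mp _ _ _ _ P_smooth Muv) as [DP _].
  destruct (smooth_mat_on_ex_mp _ _ _ _ S_smooth Muv) as [DS _].
  destruct (frame_eqs u v Muv) as (EPu & _ & ESu & _).
  unfold phi. rewrite mpu_mul, mpu_tr, EPu, ESu by (auto; now apply ex_mpu_tr).
  now rewrite mmul_sandwich_derivative, U1_add_tr_U2.
Qed.

Lemma frame_pv u v : M (u, v) -> mpv phi u v = sandwich (P u v) (S u v) (E21 (exp (om u v / 2))).
Proof.
  intros Muv.
  destruct (smooth_mat_on_ex_mp _ _ _ _ P_smooth Muv) as [_ DP].
  destruct (smooth_mat_on_ex_mp _ _ _ _ S_smooth Muv) as [_ DS].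
  destruct (frame_eqs u v Muv) as (_ & EPv & _ & ESv).
  unfold phi. rewrite mpv_mul, mpv_tr, EPv, ESv by (auto; now apply ex_mpv_tr).
  now rewrite mmul_sandwich_derivative, V1_add_tr_V2.
Qed.

Lemma frame_puv u v : M (u, v) ->
  mpv (mpu phi) u v =
  sandwich (P u v) (S u v) (mscal (exp (om u v) / 2) (madd I2 (mscal H kprime))).
Proof.
  intros Muv.
  set (A := fun a b => E12 (exp (om a b / 2))).
  rewrite (mpv_ext_on M M_open _ (fun a b => mmul (mmul (P a b) (A a b)) (mtr (S a b))) u v)
    by (auto; exact frame_pu).
  destruct (smooth_mat_on_ex_mp _ _ _ _ P_smooth Muv) as [_ DP].
  destruct (smooth_mat_on_ex_mp _ _ _ _ S_smooth Muv) as [_ DS].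
  destruct (Derive_exp_half (fun t => om u t) v) as [DA EA];
    [exact (proj2 (smooth_on_ex_derive _ _ _ _ om_smooth Muv))|].
  assert (DA' : ex_mpv A u v) by (unfold ex_mpv, A, E12; simpl; repeat split; auto; apply ex_derive_const).
  assert (EA' : mpv A u v = E12 (exp (om u v / 2) * (pv om u v / 2))).
  { unfold mpv, pv, A, E12; simpl. rewrite !Derive_const. now rewrite EA. }
  destruct (frame_eqs u v Muv) as (_ & EPv & _ & ESv).
  rewrite (mpv_mul (fun a b => mmul (P a b) (A a b)) (fun a b => mtr (S a b)))
    by (auto using ex_mpv_mul, ex_mpv_tr).
  rewrite mpv_mul, mpv_tr, EA', EPv, ESv by auto.
  now rewrite sandwich_derivative, Gauss_formula.
Qed.

Lemma frame_CMC_immersion :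
  conformal_timelike_CMC_immersion M phi om H (fun u v => mmul (mmul (P u v) kprime) (mtr (S u v))).
Proof.
  split; [now apply smooth_mat_on_mul, smooth_mat_on_tr|].
  split; [apply smooth_mat_on_mul; auto using smooth_mat_on_mul, smooth_mat_on_const, smooth_mat_on_tr|].
  intros u v Muv. cbv zeta.
  rewrite frame_pu, frame_pv, frame_puv by exact Muv.
  unfold phi. rewrite (sandwich_I2 (P u v) (S u v)).
  exact (sandwich_CMC_conditions (P u v) (S u v) (om u v) H (P_SL2 u v Muv) (S_SL2 u v Muv)).
Qed.

End Frame.

Definition cof (a : mat2) : mat2 := M2 (m22 a) (- m21 a) (- m12 a) (m11 a).

Lemma cof_mmul a b : cof (mmul a b) = mmul (cof a) (cof b).
Proof. destruct a, b; unfold cof, mmul; simpl; f_equal; ring. Qed.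

Lemma mdet_cof a : mdet (cof a) = mdet a.
Proof. destruct a; unfold cof, mdet; simpl; ring. Qed.

Lemma tr_minv a : mdet a = 1 -> mtr (minv a) = cof a.
Proof. intros Ha. unfold minv, mtr, cof. rewrite Ha. simpl. f_equal; field. Qed.

Lemma mtr_mtr a : mtr (mtr a) = a.
Proof. destruct a; reflexivity. Qed.

Lemma mpu_cof F u v : mpu (fun a b => cof (F a b)) u v = cof (mpu F u v).
Proof. unfold mpu, pu, cof; simpl. f_equal; apply Derive_opp. Qed.

Lemma mpv_cof F u v : mpv (fun a b => cof (F a b)) u v = cof (mpv F u v).
Proof. unfold mpv, pv, cof; simpl. f_equal; apply Derive_opp. Qed.

Lemma cof_U2' om Q H u v : cof (U2' om Q H u v) = U2 om Q H u v.
Proof. unfold cof, U2, U2'; simpl; f_equal; ring. Qed.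

Lemma cof_V2' om Rr H u v : cof (V2' om Rr H u v) = V2 om Rr H u v.
Proof. unfold cof, V2, V2'; simpl; f_equal; ring. Qed.

Lemma smooth_mat_on_cof M A : open M -> smooth_mat_on M A -> smooth_mat_on M (fun u v => cof (A u v)).
Proof.
  intros HM (A1 & A2 & A3 & A4); unfold cof; simpl.
  repeat split; try apply (smooth_on_opp M HM); assumption.
Qed.

Theorem theorem5p1 (M : R * R -> Prop) (om Q Rr : R -> R -> R) (H : R) :
  simply_connected_domain M ->
  smooth_on M om -> smooth_on M Q -> smooth_on M Rr ->
  (forall Phi1 Phi2 : R -> R -> mat2,
     smooth_mat_on M Phi1 -> smooth_mat_on M Phi2 ->
     into_SL2 M Phi1 -> into_SL2 M Phi2 ->
     (forall u v, M (u, v) ->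
        mpu Phi1 u v = mmul (Phi1 u v) (U1 om Q H u v) /\
        mpv Phi1 u v = mmul (Phi1 u v) (V1 om Rr H u v) /\
        mpu Phi2 u v = mmul (Phi2 u v) (U2 om Q H u v) /\
        mpv Phi2 u v = mmul (Phi2 u v) (V2 om Rr H u v)) ->
     conformal_timelike_CMC_immersion M
       (fun u v => mmul (Phi1 u v) (mtr (Phi2 u v))) om H
       (fun u v => mmul (mmul (Phi1 u v) kprime) (mtr (Phi2 u v)))) /\
  (forall Psi1 Psi2 : R -> R -> mat2,
     smooth_mat_on M Psi1 -> smooth_mat_on M Psi2 ->
     into_SL2 M Psi1 -> into_SL2 M Psi2 ->
     (forall u v, M (u, v) ->
        mpu Psi1 u v = mmul (Psi1 u v) (U1 om Q H u v) /\
        mpv Psi1 u v = mmul (Psi1 u v) (V1 om Rr H u v) /\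
        mpu Psi2 u v = mmul (Psi2 u v) (U2' om Q H u v) /\
        mpv Psi2 u v = mmul (Psi2 u v) (V2' om Rr H u v)) ->
     conformal_timelike_CMC_immersion M
       (fun u v => mmul (Psi1 u v) (minv (Psi2 u v))) om H
       (fun u v => mmul (mmul (Psi1 u v) kprime) (minv (Psi2 u v)))).
Proof.
  intros [HM _] Hom _ _. split; [intros; now apply (frame_CMC_immersion M om Q Rr H)|].
  intros P S SP SS DP DS Eq.
  set (T := fun u v => mtr (minv (S u v))).
  assert (TC : forall u v, M (u, v) -> cof (S u v) = T u v)
    by (intros u v Muv; symmetry; now apply tr_minv, DS).
  assert (ET : forall X : mat2 -> mat2, (fun u v => mmul (X (P u v)) (minv (S u v))) =
                                        (fun u v => mmul (X (P u v)) (mtr (T u v))))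
    by (intros X; extensionality u; extensionality v; unfold T; now rewrite mtr_mtr).
  rewrite (ET (fun p => p)), (ET (fun p => mmul p kprime)).
  apply (frame_CMC_immersion M om Q Rr H P T); auto.
  - now apply (smooth_mat_on_ext M HM (fun u v => cof (S u v))), smooth_mat_on_cof.
  - intros u v Muv. rewrite <- TC, mdet_cof by exact Muv. now apply DS.
  - intros u v Muv. destruct (Eq u v Muv) as (e1 & e2 & e3 & e4).
    rewrite <- (mpu_ext_on M HM _ _ u v TC Muv), <- (mpv_ext_on M HM _ _ u v TC Muv).
    rewrite mpu_cof, mpv_cof, e3, e4, !cof_mmul, cof_U2', cof_V2', (TC u v Muv).
    auto.
Qed.
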